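(* Let $h\ge0$, let $z\in\mathcal{Q}\cap L^\infty$ and $q\in L^\infty$. Then $$\big(\mathcal{F}_h'(z)[q]\big)^2\le|\Omega|\,\nu\,\mathcal{F}_h''(z)[q^2].$$
   Context: $\Omega\subset\mathbb{R}^d$ bounded open domain, $|\Omega|$ its measure. $Q=\{(q,s)\in\mathbb{R}^d\times\mathbb{R}:s\ge\Lambda(q)\}$ with $\Lambda$ convex continuous, and $\mathcal{Q}$ the set of functions with values in $Q$ (at which $F$ is finite). $F$ is a $\nu$-self-concordant barrier for $Q$: $|F'''(z)[u^3]|\le2(F''(z)[u^2])^{3/2}$ and $|F'(z)[u]|\le\sqrt\nu(F''(z)[u^2])^{1/2}$. For $h>0$, $\int_\Omega^{(h)}\eta=\sum_{K\in T_h}\sum_k\omega_{K,k}\eta|_K(x_{K,k})$ is a quadrature rule on a triangulation $T_h$ of $\Omega$ with positive weights, integrating constants exactly; $\int^{(0)}$ is the exact integral. $\mathcal{F}_h(w)=\int_\Omega^{(h)}F(w(x))$, with derivatives $\mathcal{F}_h'(z)[q]=\int_\Omega^{(h)}F'(z)[q]$, $\mathcal{F}_h''(z)[q^2]=\int_\Omega^{(h)}F''(z)[q^2]$. *)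

From HB Require Import structures.
From mathcomp Require Import all_boot all_order all_algebra.
From mathcomp Require Import all_classical all_reals all_analysis.
Set Implicit Arguments. Unset Strict Implicit. Unset Printing Implicit Defensive.
Import Order.TTheory GRing.Theory Num.Theory.
Import numFieldNormedType.Exports.
Local Open Scope classical_set_scope.
Local Open Scope ring_scope.

Definition Vsp (R : realType) (d : nat) := ('rV[R]_d * R)%type.

Definition epiQ (R : realType) (d : nat) (Lam : 'rV[R]_d -> R) : set (Vsp R d) :=
  [set p | Lam p.1 <= p.2].

Definition convex_fun (R : realType) (d : nat) (Lam : 'rV[R]_d -> R) :=
  forall (a b : 'rV[R]_d) (t : R), 0 <= t <= 1 ->
    Lam (t *: a + (1 - t) *: b) <= t * Lam a + (1 - t) * Lam b.

Definition dF (R : realType) (d : nat) (F : Vsp R d -> R) (z u : Vsp R d) : R :=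
  derive F z u.
Definition d2F (R : realType) (d : nat) (F : Vsp R d -> R) (z u : Vsp R d) : R :=
  derive (fun w => derive F w u) z u.
Definition d3F (R : realType) (d : nat) (F : Vsp R d -> R) (z u : Vsp R d) : R :=
  derive (fun w => derive (fun w' => derive F w' u) w u) z u.

Definition sc_barrier (R : realType) (d : nat) (Q : set (Vsp R d))
    (F : Vsp R d -> R) (nu : R) : Prop :=
  let D := interior Q in
  [/\ (forall z u, D z ->
        [/\ derivable F z u,
            derivable (fun w => derive F w u) z u &
            derivable (fun w => derive (fun w' => derive F w' u) w u) z u]),
      (forall z u, D z ->
        [/\ {for (z, u), continuous (fun p : Vsp R d * Vsp R d => dF F p.1 p.2)},
            {for (z, u), continuous (fun p : Vsp R d * Vsp R d => d2F F p.1 p.2)} &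
            {for (z, u), continuous (fun p : Vsp R d * Vsp R d => d3F F p.1 p.2)}]),
      (forall z u, D z -> 0 <= d2F F z u) /\
      (forall x, closure D x -> ~ D x ->
         F @ within D (nbhs x) --> +oo),
      (forall z u, D z -> `|d3F F z u| <= 2 * powR (d2F F z u) (3 / 2)) &
      (forall z u, D z -> `|dF F z u| <= Num.sqrt nu * Num.sqrt (d2F F z u))].

Record quad_rule (R : realType) (dT : measure_display) (T : measurableType dT)
    (mu : {measure set T -> \bar R}) (Om : set T) := QuadRule {
  q_idx : finType;
  q_w : q_idx -> R;
  q_x : q_idx -> T;
  q_w_pos : forall i, 0 < q_w i;
  q_x_in : forall i, Om (q_x i);
  q_const : ((\sum_i q_w i)%:E = mu Om)%E }.

Definition quad_int (R : realType) (dT : measure_display) (T : measurableType dT)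
    (mu : {measure set T -> \bar R}) (Om : set T) (qr : quad_rule mu Om)
    (eta : T -> R) : R :=
  \sum_(i : q_idx qr) q_w i * eta (q_x i).

Definition int_h (R : realType) (dT : measure_display) (T : measurableType dT)
    (mu : {measure set T -> \bar R}) (Om : set T) (qr : R -> quad_rule mu Om)
    (h : R) (eta : T -> R) : \bar R :=
  if h == 0 then (\int[mu]_(x in Om) (eta x)%:E)%E
  else (quad_int (qr h) eta)%:E.

Definition Linf (R : realType) (dT : measure_display) (T : measurableType dT)
    (mu : {measure set T -> \bar R}) (Om : set T) (d : nat) (f : T -> Vsp R d) :=
  [/\ (forall i : 'I_d, measurable_fun Om (fun x => (f x).1 ord0 i)),
      measurable_fun Om (fun x => (f x).2) &
      exists M : R, {ae mu, forall x, Om x -> `|f x| <= M}].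

Definition Fh1 (R : realType) (dT : measure_display) (T : measurableType dT)
    (mu : {measure set T -> \bar R}) (Om : set T) (qr : R -> quad_rule mu Om)
    (d : nat) (F : Vsp R d -> R) (h : R) (z q : T -> Vsp R d) : \bar R :=
  int_h qr h (fun x => dF F (z x) (q x)).
Definition Fh2 (R : realType) (dT : measure_display) (T : measurableType dT)
    (mu : {measure set T -> \bar R}) (Om : set T) (qr : R -> quad_rule mu Om)
    (d : nat) (F : Vsp R d -> R) (h : R) (z q : T -> Vsp R d) : \bar R :=
  int_h qr h (fun x => d2F F (z x) (q x)).

From HB Require Import structures.
From mathcomp Require Import all_boot all_order all_algebra.
From mathcomp Require Import all_classical all_reals all_analysis.
From mathcomp Require Import ring lra measurable_realfun.
Set Implicit Arguments. Unset Strict Implicit. Unset Printing Implicit Defensive.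
Import Order.TTheory GRing.Theory Num.Theory.
Import numFieldNormedType.Exports.
Local Open Scope classical_set_scope.
Local Open Scope ring_scope.

(* Only two properties of the barrier matter: F'' >= 0 and
   |F'(z)[u]| <= sqrt nu sqrt (F''(z)[u^2]) on the interior of Q.  By AM-GM the
   latter gives 2 |F'(z)[q]| <= t nu F''(z)[q^2] + 1/t for every t > 0.
   Integrating against the exact integral or a positive-weight quadrature, both
   of total mass |Omega|, yields 2 int |F'| <= t nu F_h'' + |Omega| / t, and
   optimising in t gives (int |F'|)^2 <= |Omega| nu F_h''.  This is
   Cauchy-Schwarz in a form that needs no square integrability.  For nu < 0 the
   bound forces F' = 0 near z, hence F'' = 0, and both sides vanish.  The
   continuity of F' and F'' is used only to make the integrands measurable. *)

Lemma sqr_le_of_amgm_bound (R : realFieldType) (X A M : R) :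
  0 <= X -> 0 <= A -> 0 <= M ->
  (forall t, 0 < t -> 2 * X <= t * A + M / t) -> X ^+ 2 <= M * A.
Proof.
move=> X0 A0 M0 bound; rewrite leNgt; apply/negP => ltMA_X2.
have X_gt0 : 0 < X.
  by rewrite lt_def X0 andbT; apply: contraTneq ltMA_X2 => ->; rewrite expr0n -leNgt mulr_ge0.
have [A_gt0|] := ltP 0 A.
  have := bound (X / A) (divr_gt0 X_gt0 A_gt0).
  rewrite divfK ?gt_eqF // invf_div mulrA -subr_ge0 => h.
  have : X <= M * A / X by lra.
  by rewrite ler_pdivlMr // -expr2 leNgt ltMA_X2.
move=> A_le0; have A_eq0 : A = 0 by lra.
rewrite A_eq0 in bound ltMA_X2.
have [M_gt0|] := ltP 0 M.
  have := bound (M / X) (divr_gt0 M_gt0 X_gt0).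
  by rewrite mulr0 add0r invf_div mulrCA divff ?gt_eqF // mulr1; lra.
move=> M_le0; have M_eq0 : M = 0 by lra.
rewrite M_eq0 in bound.
by have := bound 1 ltr01; lra.
Qed.

Lemma sqr_le_of_amgm_bound_EFin (R : realFieldType) (X A : \bar R) (M : R) :
  (0 <= X)%E -> (0 <= A)%E -> 0 < M ->
  (forall t : R, 0 < t -> (2%:E * X <= t%:E * A + (M / t)%:E)%E) ->
  (X * X <= M%:E * A)%E.
Proof.
move=> X0 A0 M_gt0 bound.
case: A A0 bound => [a a0 bound|_ _|//]; last by rewrite mulry gtr0_sg // mul1e leey.
case: X X0 bound => [x x0 bound|_ bound|//].
  rewrite -!EFinM lee_fin -expr2 !lee_fin in x0 a0 *.
  apply: (sqr_le_of_amgm_bound x0 a0 (ltW M_gt0)) => t t0.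
  by have := bound t t0; rewrite -!EFinM -EFinD lee_fin.
by have := bound 1 ltr01; rewrite mulry gtr0_sg // mul1e -EFinM -EFinD leye_eq.
Qed.

Lemma amgm_sqrt (R : rcfType) (c t : R) :
  0 <= c -> 0 < t -> 2 * Num.sqrt c <= t * c + t^-1.
Proof.
move=> c0 t0; rewrite -{2}(sqr_sqrtr c0) -subr_ge0.
have -> : t * Num.sqrt c ^+ 2 + t^-1 - 2 * Num.sqrt c =
          (t * Num.sqrt c - 1) ^+ 2 / t by field; rewrite gt_eqF.
by rewrite divr_ge0 ?sqr_ge0 ?ltW.
Qed.

Lemma amgm_of_le_sqrt (R : rcfType) (a b nu t : R) :
  0 <= nu -> 0 <= b -> 0 < t ->
  `|a| <= Num.sqrt nu * Num.sqrt b -> 2 * `|a| <= t * (nu * b) + t^-1.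
Proof.
move=> nu0 b0 t0; rewrite -sqrtrM // => le_a.
by have := amgm_sqrt (mulr_ge0 nu0 b0) t0; lra.
Qed.

Lemma weighted_sum_sqr_le (R : rcfType) (I : finType) (w a b : I -> R) (nu : R) :
  (forall i, 0 <= w i) -> 0 <= nu -> (forall i, 0 <= b i) ->
  (forall i, `|a i| <= Num.sqrt nu * Num.sqrt (b i)) ->
  (\sum_i w i * a i) ^+ 2 <= (\sum_i w i) * (nu * \sum_i w i * b i).
Proof.
move=> w0 nu0 b0 le_ab.
set X := \sum_i w i * `|a i|.
have le_sum_X : `|\sum_i w i * a i| <= X.
  apply: le_trans (ler_norm_sum _ _ _) _; apply: ler_sum => i _.
  by rewrite normrM ger0_norm.
have X0 : 0 <= X by apply: sumr_ge0 => i _; rewrite mulr_ge0.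
apply: le_trans (_ : X ^+ 2 <= _).
  by rewrite -real_normK ?num_real // lerXn2r ?nnegrE.
apply: sqr_le_of_amgm_bound => //.
- by rewrite mulr_ge0 // sumr_ge0 // => i _; rewrite mulr_ge0.
- by rewrite sumr_ge0.
move=> t t0.
have -> : t * (nu * \sum_i w i * b i) + (\sum_i w i) / t =
          \sum_i w i * (t * (nu * b i) + t^-1).
  rewrite !mulr_sumr mulr_suml -big_split /=; apply: eq_bigr => i _; ring.
rewrite /X mulr_sumr; apply: ler_sum => i _; rewrite mulrCA ler_wpM2l //.
exact: amgm_of_le_sqrt.
Qed.

Section IntegralBound.
Local Open Scope ereal_scope.
Variables (R : realType) (dT : measure_display) (T : measurableType dT).
Variables (mu : {measure set T -> \bar R}) (Om : set T) (a b : T -> R) (nu : R).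
Hypotheses (mOm : measurable Om) (ma : measurable_fun Om a) (mb : measurable_fun Om b).
Hypotheses (nu0 : (0 <= nu)%R) (b0 : forall x, Om x -> (0 <= b x)%R).
Hypothesis le_ab : forall x, Om x -> (`|a x| <= Num.sqrt nu * Num.sqrt (b x))%R.

Lemma integral_amgm_bound (t : R) : (0 < t)%R ->
  2%:E * \int[mu]_(x in Om) `|a x|%:E <=
  (t * nu)%:E * \int[mu]_(x in Om) (b x)%:E + t^-1%:E * mu Om.
Proof.
move=> t0.
have mabs : measurable_fun Om (fun x => `|a x|%R) by apply: measurableT_comp.
have mtb : measurable_fun Om (fun x => t * nu * b x)%R by apply: measurable_funM.
have -> : 2%:E * \int[mu]_(x in Om) `|a x|%:E = \int[mu]_(x in Om) (2 * `|a x|)%:E.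
  under [RHS]eq_integral do rewrite EFinM.
  by rewrite ge0_integralZl_EFin //; apply/measurable_EFinP.
have -> : (t * nu)%:E * \int[mu]_(x in Om) (b x)%:E + t^-1%:E * mu Om =
          \int[mu]_(x in Om) (t * nu * b x + t^-1)%:E.
  under [RHS]eq_integral do rewrite EFinD.
  rewrite ge0_integralD //; first last.
  - by move=> x _; rewrite lee_fin invr_ge0 ltW.
  - exact/measurable_EFinP.
  - by move=> x Ox; rewrite lee_fin !mulr_ge0 ?(ltW t0) ?b0.
  under [X in _ = X + _]eq_integral do rewrite EFinM.
  rewrite ge0_integralZl_EFin ?integral_cst ?mulr_ge0 ?(ltW t0) //.
  exact/measurable_EFinP.
apply: ge0_le_integral => //.
- exact/measurable_EFinP/measurable_funM.
- exact/measurable_EFinP/measurable_funD.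
move=> x Ox; rewrite lee_fin -!mulrA.
exact: amgm_of_le_sqrt (b0 Ox) t0 (le_ab Ox).
Qed.

Lemma integral_sqr_le : mu Om < +oo ->
  (\int[mu]_(x in Om) (a x)%:E) * (\int[mu]_(x in Om) (a x)%:E) <=
  mu Om * nu%:E * \int[mu]_(x in Om) (b x)%:E.
Proof.
move=> muOm_fin; have mEa : measurable_fun Om (EFin \o a) by exact/measurable_EFinP.
have := muOm_fin; rewrite -ge0_fin_numE // => /fineK; set M := fine _ => muOmE.
have M0 : (0 <= M)%R by rewrite -lee_fin muOmE.
have [M_gt0|M_le0] := ltP 0%R M; last first.
  have mu0 : mu Om = 0 by rewrite -muOmE (_ : M = 0%R) //; apply/le_anti/andP.
  by rewrite null_set_integral // mu0 !mul0e.
set I := \int[mu]_(x in Om) (a x)%:E.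
set X := \int[mu]_(x in Om) `|a x|%:E.
have X0 : 0 <= X by apply: integral_ge0.
have le_IX : `|I| <= X by apply: le_abse_integral.
apply: (@le_trans _ _ (X * X)).
  by apply: le_trans (lee_abs _) _; rewrite abseM lee_pmul.
rewrite -muOmE -muleA; apply: sqr_le_of_amgm_bound_EFin => //.
  by rewrite mule_ge0 ?lee_fin // integral_ge0 // => x Ox; rewrite lee_fin b0.
move=> t t0; rewrite (mulrC M) EFinM muOmE muleA -EFinM.
exact: integral_amgm_bound.
Qed.

End IntegralBound.

(* Open subsets of (R^d x R)^2 are countable unions of balls with rational
   centres and radii; this reduces the measurability of x |-> Phi (z x, q x)
   to that of the coordinates of z and q. *)
Section RationalBoxes.
Variables (R : realType) (d : nat).

Definition ratV (c : 'rV[rat]_d * rat) : Vsp R d := (map_mx ratr c.1, ratr c.2).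

Lemma ratV_dense (p : Vsp R d) (r : R) : 0 < r -> exists c, ball p r (ratV c).
Proof.
move=> r0; have rat_near (y : R) : exists x : rat, ball y r (ratr x).
  by have [|x] := @rat_in_itvoo R (y - r) (y + r); [lra | exists x; rewrite ball_itv].
have [c2 near2] := rat_near p.2.
have /choice [c1 near1] : forall ij : 'I_1 * 'I_d, exists x, ball (p.1 ij.1 ij.2) r (ratr x).
  by move=> ij; exact: rat_near.
exists (\matrix_(i, j) c1 (i, j), c2); split => //=; split => // i j.
by rewrite !mxE; exact: (near1 (i, j)).
Qed.

Definition rat_box (k : ('rV[rat]_d * rat) * ('rV[rat]_d * rat) * rat) :
  set (Vsp R d * Vsp R d) := ball (ratV k.1.1, ratV k.1.2) (ratr k.2).

Lemma open_rat_box_cover (W : set (Vsp R d * Vsp R d)) (p : Vsp R d * Vsp R d) :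
  open W -> W p -> exists k, rat_box k p /\ rat_box k `<=` W.
Proof.
move=> oW Wp; have /nbhs_ballP[e e0 ballW] : nbhs p W by exact: open_nbhs_nbhs.
have [r] : exists r : rat, ratr r \in `]0, e / 2[ by apply: rat_in_itvoo; rewrite divr_gt0.
rewrite in_itv /= => /andP[r0 r_lt].
have [c1 near1] := ratV_dense p.1 r0.
have [c2 near2] := ratV_dense p.2 r0.
exists ((c1, c2), r); split; first by split; apply: ball_sym.
move=> y [y1 y2]; apply: ballW; apply: (@le_ball _ _ _ (ratr r + ratr r)); first lra.
by split; [exact: ball_triangle near1 y1 | exact: ball_triangle near2 y2].
Qed.

End RationalBoxes.

Section MeasurableComposition.
Variables (R : realType) (dT : measure_display) (T : measurableType dT).
Variables (Om : set T) (d : nat).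
Hypothesis mOm : measurable Om.

Definition coord_measurable (f : T -> Vsp R d) :=
  (forall i : 'I_d, measurable_fun Om (fun x => (f x).1 ord0 i)) /\
  measurable_fun Om (fun x => (f x).2).

Lemma measurable_preimage_ball (f : T -> Vsp R d) (c : Vsp R d) (r : R) :
  coord_measurable f -> measurable (Om `&` [set x | ball c r (f x)]).
Proof.
move=> [mf1 mf2].
have -> : Om `&` [set x | ball c r (f x)] =
    (\bigcap_(j in [set: 'I_d])
       (Om `&` (fun x => (f x).1 ord0 j) @^-1` `]c.1 ord0 j - r, c.1 ord0 j + r[)) `&`
    (Om `&` (fun x => (f x).2) @^-1` `]c.2 - r, c.2 + r[) `&` [set _ | 0 < r].
  apply/seteqP; split => x /=.
    move=> [Ox [[r0 near1] near2]]; split=> //; split; last by move: near2; rewrite ball_itv.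
    by move=> j _; split=> //; move: (near1 ord0 j); rewrite ball_itv.
  move=> [[near1 [Ox near2]] r0]; split=> //; split; last by rewrite ball_itv.
  split=> // i j; rewrite (ord1 i).
  by have [_] := near1 j I; rewrite ball_itv.
apply: measurableI; last first.
  have [r0|r_le0] := pselect (0 < r).
    by rewrite (_ : [set _ | _] = setT) //; apply/seteqP; split.
  by rewrite (_ : [set _ | _] = set0) //; apply/seteqP; split.
apply: measurableI; last exact: mf2.
apply: fin_bigcap_measurable; first exact: finite_finset.
by move=> j _; exact: mf1.
Qed.

Lemma measurable_preimage_open (z q : T -> Vsp R d) (W : set (Vsp R d * Vsp R d)) :
  coord_measurable z -> coord_measurable q -> open W ->
  measurable (Om `&` (fun x => (z x, q x)) @^-1` W).
Proof.
move=> mz mq oW.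
pose piece k := if `[< rat_box k `<=` W >] then Om `&` (fun x => (z x, q x)) @^-1` rat_box k
                else set0.
have -> : Om `&` (fun x => (z x, q x)) @^-1` W = \bigcup_k piece k.
  apply/seteqP; split => x /=.
    move=> [Ox Wx]; have [k [box_x boxW]] := open_rat_box_cover oW Wx.
    by exists k => //; rewrite /piece; case: asboolP.
  by move=> [k _]; rewrite /piece; case: asboolP => // boxW [Ox /boxW].
apply: countable_bigcupT_measurable; first exact: countableP.
move=> k; rewrite /piece; case: asboolP => // _.
have -> : Om `&` (fun x => (z x, q x)) @^-1` rat_box k =
    (Om `&` [set x | ball (ratV R k.1.1) (ratr k.2) (z x)]) `&`
    (Om `&` [set x | ball (ratV R k.1.2) (ratr k.2) (q x)]).
  by apply/seteqP; split => x /=; [move=> [? []] | move=> [[? ?] []]].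
by apply: measurableI; exact: measurable_preimage_ball.
Qed.

Lemma measurable_fun_continuous_comp (z q : T -> Vsp R d) (D : set (Vsp R d))
    (Phi : Vsp R d * Vsp R d -> R) :
  coord_measurable z -> coord_measurable q -> open D -> (forall x, Om x -> D (z x)) ->
  (forall p, D p.1 -> {for p, continuous Phi}) ->
  measurable_fun Om (fun x => Phi (z x, q x)).
Proof.
move=> mz mq oD zD cPhi.
apply: (measurability _ (RGenOpens.measurableE R)) => _ [_ [a [b ->]] <-].
pose W := [set p : Vsp R d * Vsp R d | D p.1 /\ `]a, b[%classic (Phi p)].
have -> : Om `&` (fun x => Phi (z x, q x)) @^-1` `]a, b[%classic =
          Om `&` (fun x => (z x, q x)) @^-1` W.
  apply/seteqP; split => x /= [Ox]; last by move=> [].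
  by split=> //; split=> //; exact: zD.
apply: measurable_preimage_open => //; rewrite openE => p [Dp Phip].
apply: filterI.
  have /nbhs_ballP[e e0 ballD] : nbhs p.1 D by exact: open_nbhs_nbhs.
  by apply/nbhs_ballP; exists e => // y [y1 _]; exact: ballD.
by apply: (cPhi p Dp); apply: open_nbhs_nbhs; split; first exact: itv_open.
Qed.

End MeasurableComposition.

Section DegenerateBarrier.
Variables (R : realType) (d : nat) (D : set (Vsp R d)) (F : Vsp R d -> R).

Lemma dF_eq0_of_nu_le0 (nu : R) : nu <= 0 ->
  (forall z u, D z -> `|dF F z u| <= Num.sqrt nu * Num.sqrt (d2F F z u)) ->
  forall z u, D z -> dF F z u = 0.
Proof.
move=> nu_le0 le_dF z u Dz; apply/eqP; rewrite -normr_le0.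
by have := le_dF z u Dz; rewrite ler0_sqrtr // mul0r.
Qed.

Lemma d2F_eq0_of_dF_eq0 : open D ->
  (forall z u, D z -> dF F z u = 0) -> forall z u, D z -> d2F F z u = 0.
Proof.
move=> oD dF0 z u Dz; rewrite /d2F -(derive_cst (0 : R) z u).
apply: near_eq_derive; have : nbhs z D by exact: open_nbhs_nbhs.
by apply: filterS => w Dw; exact: dF0 w u Dw.
Qed.

End DegenerateBarrier.

Lemma int_h_eq0 (R : realType) (dT : measure_display) (T : measurableType dT)
    (mu : {measure set T -> \bar R}) (Om : set T) (qr : R -> quad_rule mu Om)
    (h : R) (eta : T -> R) :
  (forall x, Om x -> eta x = 0) -> int_h qr h eta = 0%E.
Proof.
move=> eta0; rewrite /int_h; case: ifP => _.
  by rewrite (eq_integral (fun=> 0%E)) ?integral0 // => x /set_mem /eta0 ->.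
by rewrite /quad_int big1 // => i _; rewrite eta0 ?mulr0 //; exact: q_x_in.
Qed.

Theorem mainTheorem4 (R : realType) (dT : measure_display) (T : measurableType dT)
    (mu : {measure set T -> \bar R}) (Om : set T) (d : nat)
    (Lam : 'rV[R]_d -> R) (F : Vsp R d -> R) (nu : R)
    (qr : R -> quad_rule mu Om) (h : R) (z q : T -> Vsp R d) :
  measurable Om -> (mu Om < +oo)%E ->
  convex_fun Lam -> continuous Lam ->
  sc_barrier (epiQ Lam) F nu ->
  0 <= h ->
  {in Om, forall x, interior (epiQ Lam) (z x)} -> Linf mu Om z ->
  Linf mu Om q ->
  (Fh1 qr F h z q * Fh1 qr F h z q <= mu Om * nu%:E * Fh2 qr F h z q)%E.
Proof.
move=> mOm muOm_fin _ _ [_ cF [d2F_ge0 _] _ dF_le] _ zQ [mz1 mz2 _] [mq1 mq2 _].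
set D := interior (epiQ Lam) in zQ cF d2F_ge0 dF_le.
have zD x : Om x -> D (z x) by move=> Ox; exact/zQ/mem_set.
have oD : open D by exact: open_interior.
have [nu_lt0|nu_ge0] := ltP nu 0.
  have dF0 := dF_eq0_of_nu_le0 (ltW nu_lt0) dF_le.
  have d2F0 := d2F_eq0_of_dF_eq0 oD dF0.
  by rewrite /Fh1 /Fh2 !int_h_eq0 ?mule0 // => x /zD; [exact: d2F0 | exact: dF0].
rewrite /Fh1 /Fh2 /int_h; case: ifP => _.
  have mcomp := measurable_fun_continuous_comp mOm (conj mz1 mz2) (conj mq1 mq2) oD zD.
  apply: integral_sqr_le => //.
  - by apply: (mcomp (fun p => dF F p.1 p.2)) => -[w u] /(cF _ u)[+ _ _].
  - by apply: (mcomp (fun p => d2F F p.1 p.2)) => -[w u] /(cF _ u)[_ + _].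
  - by move=> x /zD; exact: d2F_ge0.
  - by move=> x /zD; exact: dF_le.
rewrite -(q_const (qr h)) -!EFinM lee_fin -expr2 -mulrA.
apply: weighted_sum_sqr_le => // i.
- exact/ltW/q_w_pos.
- exact: d2F_ge0 _ _ (zD _ (q_x_in i)).
- exact: dF_le _ _ (zD _ (q_x_in i)).
Qed.
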